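(* The monad $\mathbb M^\bullet_\cup=(M_\cup,\eta,\mu^\bullet)$ is an IL-monad. More precisely, let $\xi:M_\cup I\to I$ be defined by $\xi(\nu)=\max\{\nu([t,1])\cdot t: t\in(0,1]\}$. Then $(I,\xi)$ is an $\mathbb M^\bullet_\cup$-algebra, and for every compactum $X$ the family of maps $\{\xi\circ M_\cup\varphi: M_\cup X\to I \mid \varphi\in C(X,I)\}$ consists of $\mathbb M^\bullet_\cup$-algebra morphisms $(M_\cup X,\mu^\bullet X)\to(I,\xi)$ and separates the points of $M_\cup X$.
   Context: A compactum is a compact Hausdorff space; $I=[0,1]$; $C(X,I)$ is the set of continuous maps $X\to I$. An (upper-semicontinuous) capacity on a compactum $X$ is a function $\nu$ from the closed subsets of $X$ to $I$ such that: (1) $\nu(X)=1$, $\nu(\emptyset)=0$; (2) if $F\subset G$ then $\nu(F)\le\nu(G)$; (3) if $\nu(F)<a$ then there is an open set $O\supset F$ with $\nu(B)<a$ for every closed $B\subset O$. $MX$ is the set of all capacities on $X$, topologized by the subbase of sets $\{c: c(F)<a\}$ ($F$ closed, $a\in I$) and $\{c: c(U)>a\}$ ($U$ open, $a\in I$), where $c(U)=\sup\{c(K):K\text{ closed},K\subset U\}$. A possibility capacity is one with $\nu(A\cup B)=\max\{\nu(A),\nu(B)\}$ for all closed $A,B$; $M_\cup X\subset MX$ is the (closed) subspace of possibility capacities. For continuous $f:X\to Y$, $M_\cup f(c)(F)=c(f^{-1}(F))$. $\eta X(x)(F)=1$ if $x\in F$, $0$ otherwise. For closed $F\subset X$ and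 $t\in I$, $F_t=\{c\in M_\cup X: c(F)\ge t\}$, and $\mu^\bullet X:M_\cup(M_\cup X)\to M_\cup X$ is $\mu^\bullet X(\mathcal C)(F)=\max\{\mathcal C(F_t)\cdot t: t\in(0,1]\}$; $(M_\cup,\eta,\mu^\bullet)$ is a monad on the category of compacta. For a monad $\mathbb T=(T,\eta,\mu)$, a $\mathbb T$-algebra is a pair $(X,\xi)$ with $\xi:TX\to X$ continuous, $\xi\circ\eta X=\mathrm{id}_X$ and $\xi\circ\mu X=\xi\circ T\xi$; a map $f:X\to Y$ is a morphism of $\mathbb T$-algebras $(X,\xi)\to(Y,\xi')$ if $\xi'\circ Tf=f\circ\xi$. (For each $X$, $(TX,\mu X)$ is a $\mathbb T$-algebra.) A monad $\mathbb T$ on compacta is an IL-monad if there is $\xi:TI\to I$ with $(I,\xi)$ a $\mathbb T$-algebra such that for every compactum $X$ there is a point-separating family of $\mathbb T$-algebra morphisms $(TX,\mu X)\to(I,\xi)$. *)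

From Stdlib Require Import Reals Lra List ClassicalEpsilon.
Open Scope R_scope.

Record space := Space { pt :> Type; op : (pt -> Prop) -> Prop }.

Definition closed (X : space) (A : X -> Prop) : Prop :=
  op X (fun x => ~ A x).

Definition subset {T : Type} (A B : T -> Prop) : Prop := forall x, A x -> B x.

Definition is_topology (X : space) : Prop :=
  op X (fun _ => True) /\
  (forall U V, op X U -> op X V -> op X (fun x => U x /\ V x)) /\
  (forall Fm : (X -> Prop) -> Prop, (forall U, Fm U -> op X U) ->
      op X (fun x => exists U, Fm U /\ U x)).

Definition compact (X : space) : Prop :=
  forall Fm : (X -> Prop) -> Prop,
    (forall U, Fm U -> op X U) ->
    (forall x : X, exists U, Fm U /\ U x) ->
    exists l : list (X -> Prop), Forall Fm l /\ forall x : X, exists U, In U l /\ U x.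

Definition hausdorff (X : space) : Prop :=
  forall x y : X, x <> y ->
    exists U V, op X U /\ op X V /\ U x /\ V y /\ forall z, ~ (U z /\ V z).

Definition compactum (X : space) : Prop :=
  is_topology X /\ compact X /\ hausdorff X.

Definition cont (X Y : space) (f : X -> Y) : Prop :=
  forall V, op Y V -> op X (fun x => V (f x)).

Definition gen_op {T : Type} (S : (T -> Prop) -> Prop) (U : T -> Prop) : Prop :=
  forall x, U x -> exists l : list (T -> Prop),
    Forall S l /\ Forall (fun V => V x) l /\
    forall y, Forall (fun V => V y) l -> U y.

Definition Icar := { r : R | 0 <= r <= 1 }.

Definition I_op (U : Icar -> Prop) : Prop :=
  forall x, U x -> exists eps, 0 < eps /\
    forall y : Icar, Rabs (proj1_sig y - proj1_sig x) < eps -> U y.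

Definition I : space := Space Icar I_op.

Definition clamp (r : R) : R := Rmax 0 (Rmin 1 r).

Lemma clamp_in (r : R) : 0 <= clamp r <= 1.
Proof. unfold clamp, Rmax, Rmin; repeat destruct Rle_dec; lra. Qed.

(* Coerce a real into I (identity on [0,1]); only used where the real value is
   already in [0,1], to give maps the codomain I. *)
Definition toI (r : R) : I := exist _ (clamp r) (clamp_in r).

(** * Supremum of a set of reals (0 if it has no least upper bound) *)
Definition Rsup (E : R -> Prop) : R :=
  match excluded_middle_informative (exists l, is_lub E l) with
  | left h => proj1_sig (constructive_indefinite_description _ h)
  | right _ => 0
  end.

(* A set function nu is represented on all subsets; its values on non-closed
   sets are normalised to 0 so that capacities correspond exactly to the
   functions on closed sets of the paper. *)
Definition is_capacity (X : space) (nu : (X -> Prop) -> R) : Prop :=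
  (forall F, closed X F -> 0 <= nu F <= 1) /\
  nu (fun _ => True) = 1 /\ nu (fun _ => False) = 0 /\
  (forall F G, closed X F -> closed X G -> subset F G -> nu F <= nu G) /\
  (forall F a, closed X F -> 0 <= a <= 1 -> nu F < a ->
     exists O, op X O /\ subset F O /\
       forall B, closed X B -> subset B O -> nu B < a) /\
  (forall A, ~ closed X A -> nu A = 0).

Definition is_poss_capacity (X : space) (nu : (X -> Prop) -> R) : Prop :=
  is_capacity X nu /\
  forall A B, closed X A -> closed X B ->
    nu (fun x => A x \/ B x) = Rmax (nu A) (nu B).

Definition MUcar (X : space) := { nu : (X -> Prop) -> R | is_poss_capacity X nu }.

(* Subbase of the topology of M_cup X.  For U open,
   c(U) = sup{c(K) : K closed, K in U}, so c(U) > a iff some closed K in U has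
   c(K) > a. *)
Definition MU_subbase (X : space) (W : MUcar X -> Prop) : Prop :=
  (exists F a, closed X F /\ 0 <= a <= 1 /\
     forall c, W c <-> proj1_sig c F < a) \/
  (exists U a, op X U /\ 0 <= a <= 1 /\
     forall c, W c <-> exists K, closed X K /\ subset K U /\ proj1_sig c K > a).

Definition MU (X : space) : space := Space (MUcar X) (gen_op (MU_subbase X)).

Definition push {X Y : space} (f : X -> Y) (nu : (X -> Prop) -> R) : (Y -> Prop) -> R :=
  fun F => nu (fun x => F (f x)).

Definition eta (X : space) (x : X) : (X -> Prop) -> R :=
  fun F => if excluded_middle_informative (F x) then 1 else 0.

Definition Ft (X : space) (F : X -> Prop) (t : R) : MU X -> Prop :=
  fun c => proj1_sig c F >= t.

Definition mu_bullet (X : space) (C : (MU X -> Prop) -> R) : (X -> Prop) -> R :=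
  fun F => Rsup (fun s => exists t, 0 < t <= 1 /\ s = C (Ft X F t) * t).

Definition xi_raw (nu : (I -> Prop) -> R) : R :=
  Rsup (fun s => exists t, 0 < t <= 1 /\
          s = nu (fun r : I => t <= proj1_sig r) * t).

Definition xi_r (nu : (I -> Prop) -> R) : I := toI (xi_raw nu).

Definition xi (c : MU I) : I := xi_r (proj1_sig c).

Definition xiM (X : space) (phi : X -> I) (c : MU X) : I :=
  xi_r (push phi (proj1_sig c)).

(** For a compactum [X], a continuous [phi : X -> I] and a set function [nu],
  the map [xi o M_cup phi] sends [nu] to the Sugeno-type functional
      [sugeno phi nu = sup_{t in (0,1]} nu {phi >= t} * t],
  and [xi] itself is the case [X = I], [phi = id].  All statements of the
  theorem are therefore statements about this one functional:

  - basic facts on weighted suprema [sup_t g(t) * t] of [[0,1]]-valued [g];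
  - continuity of [c |-> sugeno phi c] on [M_cup X]: lower semicontinuity
    from a single subbasic set, upper semicontinuity from finitely many
    subbasic sets along a grid [i/N] of levels;
  - the unit law [xi (eta x) = x] by a direct computation;
  - the multiplication law [sugeno (xi o M_cup phi) C = sugeno phi (mu C)]:
    [<=] is a pointwise estimate, [>=] covers the superlevel sets of
    [xi o M_cup phi] by finitely many closed sets [F_t(L_s)], where
    [L_s = {phi >= s}] and [F_t(L) = {c | c(L) >= t}], and uses that a
    possibility capacity of a finite union is the maximum of its values;
    the algebra law for [(I, xi)] is the case [X = I], [phi = id];
  - point separation: capacities differing on a closed set [A] are told
    apart by a Urysohn function for [A] inside an open set provided by the
    upper semicontinuity axiom; Urysohn's lemma is proved for compacta
    (which are normal) by the usual dyadic construction. *)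

From Stdlib Require Import ZArith Reals Lra Lia List ClassicalEpsilon
  FunctionalExtensionality PropExtensionality ProofIrrelevance Arith.
Open Scope R_scope.

Lemma Rsup_lub (E : R -> Prop) :
  (exists x, E x) -> (exists M, forall x, E x -> x <= M) -> is_lub E (Rsup E).
Proof.
  intros [x Hx] [M HM]. unfold Rsup.
  destruct excluded_middle_informative as [h|h].
  - destruct (constructive_indefinite_description _ h) as [l Hl]; exact Hl.
  - exfalso; apply h. destruct (completeness E) as [l Hl].
    + exists M; intros y Hy; apply HM; auto.
    + exists x; auto.
    + exists l; auto.
Qed.

Lemma sup_ge E s x : is_lub E s -> E x -> x <= s.
Proof. intros [H _] Hx; apply H; auto. Qed.

Lemma sup_le E s M : is_lub E s -> (forall x, E x -> x <= M) -> s <= M.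
Proof. intros [_ H] HM; apply H; exact HM. Qed.

Lemma sup_approx E s r : is_lub E s -> r < s -> exists x, E x /\ r < x.
Proof.
  intros Hs Hr. apply NNPP; intro N.
  assert (s <= r); [|lra].
  apply (sup_le E); auto. intros x Hx. apply Rnot_lt_le; intro; apply N; eauto.
Qed.

Lemma exists_floor r : 0 <= r -> exists n : nat, INR n <= r < INR n + 1.
Proof.
  intros Hr. destruct (base_Int_part r) as [H1 H2].
  assert (0 <= Int_part r)%Z.
  { destruct (Z_lt_le_dec (Int_part r) 0) as [h|h]; auto.
    assert (Hm : (Int_part r <= -1)%Z) by lia. apply IZR_le in Hm. lra. }
  exists (Z.to_nat (Int_part r)). rewrite INR_IZR_INZ, Z2Nat.id by auto. lra.
Qed.

Lemma exists_big r : exists n : nat, r < INR n.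
Proof.
  destruct (Rle_dec 0 r) as [h|h].
  - destruct (exists_floor r h) as [n Hn]. exists (S n). rewrite S_INR; lra.
  - exists 0%nat. simpl; lra.
Qed.

Lemma fine_grid eps : 0 < eps -> exists N : nat, (0 < N)%nat /\ / INR N <= eps.
Proof.
  intros He. destruct (exists_big (/ eps)) as [N HN].
  assert (HN0 : 0 < INR N) by (pose proof (Rinv_0_lt_compat _ He); lra).
  exists N. split; [destruct N; [simpl in HN0; lra|lia]|].
  rewrite <- (Rinv_inv eps). apply Rinv_le_contravar; [apply Rinv_0_lt_compat|]; lra.
Qed.

Lemma grid_point_range (N i : nat) : In i (seq 1 N) -> 0 < INR i / INR N <= 1.
Proof.
  intros Hi. apply in_seq in Hi.
  assert (HN : 0 < INR N) by (apply lt_0_INR; lia).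
  assert (0 < INR i) by (apply lt_0_INR; lia).
  assert (INR i <= INR N) by (apply le_INR; lia).
  split; [apply Rdiv_lt_0_compat; lra|].
  apply (Rmult_le_reg_r (INR N)); [lra|]. field_simplify; lra.
Qed.

Lemma grid_below (N : nat) t : (0 < N)%nat -> / INR N <= t <= 1 ->
  exists i, In i (seq 1 N) /\ INR i / INR N <= t < INR i / INR N + / INR N.
Proof.
  intros HN Ht. assert (HN0 : 0 < INR N) by (apply lt_0_INR; lia).
  destruct (exists_floor (t * INR N)) as [i [Hi1 Hi2]].
  { apply Rmult_le_pos; [pose proof (Rinv_0_lt_compat _ HN0)|]; lra. }
  assert (E : forall a, a / INR N * INR N = a) by (intro; field; lra).
  assert (1 <= t * INR N).
  { replace 1 with (/ INR N * INR N) by (field; lra). apply Rmult_le_compat_r; lra. }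
  exists i. split.
  - apply in_seq. split.
    + assert (0 < INR i) by lra. destruct i; [simpl in *; lra|lia].
    + assert (Hle : INR i <= INR N) by nra. apply INR_le in Hle. lia.
  - split; apply (Rmult_le_reg_r (INR N)) || apply (Rmult_lt_reg_r (INR N)); try lra.
    + rewrite E; lra.
    + rewrite Rmult_plus_distr_r, E, Rinv_l by lra. lra.
Qed.

Definition wsup (g : R -> R) : R :=
  Rsup (fun s => exists t, 0 < t <= 1 /\ s = g t * t).

Section WeightedSup.
Variable g : R -> R.
Hypothesis g01 : forall t, 0 < t <= 1 -> 0 <= g t <= 1.

Lemma wsup_lub : is_lub (fun s => exists t, 0 < t <= 1 /\ s = g t * t) (wsup g).
Proof.
  apply Rsup_lub.
  - exists (g 1 * 1), 1. split; [lra|reflexivity].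
  - exists 1. intros s [t [Ht ->]]. pose proof (g01 t Ht). nra.
Qed.

Lemma wsup_ge t : 0 < t <= 1 -> g t * t <= wsup g.
Proof. intros Ht. apply (sup_ge _ _ _ wsup_lub). exists t; auto. Qed.

Lemma wsup_le M : (forall t, 0 < t <= 1 -> g t * t <= M) -> wsup g <= M.
Proof. intros HM. apply (sup_le _ _ _ wsup_lub). intros s [t [Ht ->]]; auto. Qed.

Lemma wsup_approx r : r < wsup g -> exists t, 0 < t <= 1 /\ r < g t * t.
Proof.
  intros Hr. destruct (sup_approx _ _ _ wsup_lub Hr) as [s [[t [Ht ->]] Hs]]. eauto.
Qed.

Lemma wsup_range : 0 <= wsup g <= 1.
Proof.
  split.
  - eapply Rle_trans; [|apply (wsup_ge 1); lra]. pose proof (g01 1). nra.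
  - apply wsup_le. intros t Ht. pose proof (g01 t Ht). nra.
Qed.

End WeightedSup.

Lemma pext {T} (P Q : T -> Prop) : (forall x, P x <-> Q x) -> P = Q.
Proof.
  intros H; apply functional_extensionality; intro x; apply propositional_extensionality; auto.
Qed.

Section Topology.
Variable X : space.
Hypothesis HT : is_topology X.

Lemma op_inter2 U V : op X U -> op X V -> op X (fun x => U x /\ V x).
Proof. apply (proj1 (proj2 HT)). Qed.

Lemma op_local (P : X -> Prop) :
  (forall x, P x -> exists N, op X N /\ N x /\ subset N P) -> op X P.
Proof.
  intros HP.
  replace P with (fun x => exists N, (op X N /\ subset N P) /\ N x).
  - apply (proj2 (proj2 HT)). intros N [? _]; auto.
  - apply pext; intro x; split.
    + intros [N [[_ HN] h]]; auto.
    + intro h. destruct (HP x h) as [N [? [? ?]]]. exists N; auto.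
Qed.

Lemma op_union2 U V : op X U -> op X V -> op X (fun x => U x \/ V x).
Proof.
  intros HU HV. apply op_local. intros x [h|h]; [exists U|exists V];
    repeat split; auto; intros y hy; auto.
Qed.

Lemma op_const (P : Prop) : op X (fun _ => P).
Proof.
  apply op_local. intros x h. exists (fun _ => True).
  repeat split; [apply (proj1 HT)|intros y _; exact h].
Qed.

Lemma closed_union A B : closed X A -> closed X B -> closed X (fun x => A x \/ B x).
Proof.
  intros HA HB. unfold closed.
  replace (fun x => ~ (A x \/ B x)) with (fun x => ~ A x /\ ~ B x)
    by (apply pext; intro; tauto).
  apply op_inter2; auto.
Qed.

Lemma closed_empty : closed X (fun _ => False).
Proof. exact (op_const (~ False)). Qed.

End Topology.

Lemma closed_compl (X : space) (V : X -> Prop) : op X V -> closed X (fun x => ~ V x).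
Proof.
  intros HV. unfold closed. replace (fun x => ~ ~ V x) with V; auto.
  apply pext; intro x; split; [tauto|apply NNPP].
Qed.

Lemma gen_op_topology {T : Type} (S : (T -> Prop) -> Prop) :
  is_topology (Space T (gen_op S)).
Proof.
  split; [|split]; simpl.
  - intros x _. exists nil. repeat split; constructor.
  - intros U V HU HV x [hU hV].
    destruct (HU x hU) as [l1 [A1 [B1 C1]]], (HV x hV) as [l2 [A2 [B2 C2]]].
    exists (l1 ++ l2). repeat split; try (apply Forall_app; auto).
    + apply C1. apply Forall_app in H. tauto.
    + apply C2. apply Forall_app in H. tauto.
  - intros Fm HF x [U [HU hx]]. destruct (HF U HU x hx) as [l [A [B C]]].
    exists l. repeat split; auto. intros y Hy. exists U; auto.
Qed.

Lemma I_eq (a b : I) : proj1_sig a = proj1_sig b -> a = b.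
Proof.
  destruct a as [a Ha], b as [b Hb]; simpl; intros ->; f_equal; apply proof_irrelevance.
Qed.

Lemma clamp_id r : 0 <= r <= 1 -> clamp r = r.
Proof. unfold clamp, Rmax, Rmin; intros; repeat destruct Rle_dec; lra. Qed.

Definition level {X : space} (phi : X -> I) (t : R) : X -> Prop :=
  fun x => t <= proj1_sig (phi x).

Lemma level_closed (X : space) (phi : X -> I) t : cont X I phi -> closed X (level phi t).
Proof.
  intros Hc. apply (Hc (fun r : I => ~ (t <= proj1_sig r))).
  intros r Hr. exists (t - proj1_sig r); split; [lra|].
  intros y Hy. apply Rabs_def2 in Hy. lra.
Qed.

Lemma strict_level_open (X : space) (phi : X -> I) t :
  cont X I phi -> op X (fun x => t < proj1_sig (phi x)).
Proof.
  intros Hc. apply (Hc (fun r : I => t < proj1_sig r)).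
  intros r Hr. exists (proj1_sig r - t); split; [lra|].
  intros y Hy. apply Rabs_def2 in Hy. lra.
Qed.

Lemma level_antitone (X : space) (phi : X -> I) s t : s <= t -> subset (level phi t) (level phi s).
Proof. unfold level; intros H x hx; lra. Qed.

Definition bounded01 {T : Type} (nu : (T -> Prop) -> R) : Prop := forall A, 0 <= nu A <= 1.

Lemma cap_nonclosed X nu A : is_capacity X nu -> ~ closed X A -> nu A = 0.
Proof. intros H; apply (proj2 (proj2 (proj2 (proj2 (proj2 H))))). Qed.

Lemma cap_bounded X nu : is_capacity X nu -> bounded01 nu.
Proof.
  intros H A. destruct (classic (closed X A)) as [h|h].
  - apply (proj1 H); auto.
  - rewrite (cap_nonclosed X nu A H h); lra.
Qed.

Lemma cap_mono X nu F G :
  is_capacity X nu -> closed X F -> closed X G -> subset F G -> nu F <= nu G.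
Proof. intros H; apply (proj1 (proj2 (proj2 (proj2 H)))). Qed.

Lemma cap_outer X nu F a : is_capacity X nu -> closed X F -> 0 <= a <= 1 -> nu F < a ->
  exists O, op X O /\ subset F O /\ forall B, closed X B -> subset B O -> nu B < a.
Proof. intros H; apply (proj1 (proj2 (proj2 (proj2 (proj2 H))))). Qed.

Lemma cap_MU {X} (c : MU X) : is_capacity X (proj1_sig c).
Proof. exact (proj1 (proj2_sig c)). Qed.

Lemma MU_bounded {X} (c : MU X) : bounded01 (proj1_sig c).
Proof. exact (cap_bounded _ _ (cap_MU c)). Qed.

Lemma MU_differ (X : space) (c c' : MU X) :
  c <> c' -> exists A, closed X A /\ proj1_sig c A <> proj1_sig c' A.
Proof.
  intros Hne. apply NNPP; intro N. apply Hne.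
  assert (E : proj1_sig c = proj1_sig c').
  { apply functional_extensionality. intro A. apply NNPP; intro h. apply N. exists A.
    split; auto. apply NNPP; intro hA. apply h.
    rewrite !cap_nonclosed; auto using cap_MU. }
  destruct c as [f Hf], c' as [f' Hf']. simpl in E. subst. f_equal. apply proof_irrelevance.
Qed.

Definition sugeno {X : space} (phi : X -> I) (nu : (X -> Prop) -> R) : R :=
  wsup (fun t => nu (level phi t)).

Section Sugeno.
Variables (X : space) (phi : X -> I) (nu : (X -> Prop) -> R).
Hypothesis Hnu : bounded01 nu.

Lemma sugeno_ge t : 0 < t <= 1 -> nu (level phi t) * t <= sugeno phi nu.
Proof. apply (wsup_ge (fun t => nu (level phi t))). intros; apply Hnu. Qed.

Lemma sugeno_le M : (forall t, 0 < t <= 1 -> nu (level phi t) * t <= M) -> sugeno phi nu <= M.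
Proof. apply (wsup_le (fun t => nu (level phi t))). intros; apply Hnu. Qed.

Lemma sugeno_approx r : r < sugeno phi nu -> exists t, 0 < t <= 1 /\ r < nu (level phi t) * t.
Proof. apply (wsup_approx (fun t => nu (level phi t))). intros; apply Hnu. Qed.

Lemma sugeno_range : 0 <= sugeno phi nu <= 1.
Proof. apply (wsup_range (fun t => nu (level phi t))). intros; apply Hnu. Qed.

End Sugeno.

Lemma xiM_sugeno (X : space) (phi : X -> I) (c : MU X) :
  proj1_sig (xiM X phi c) = sugeno phi (proj1_sig c).
Proof. apply clamp_id, sugeno_range, MU_bounded. Qed.

Lemma xi_r_sugeno (X : space) (phi : X -> I) nu : xi_r (push phi nu) = toI (sugeno phi nu).
Proof. reflexivity. Qed.

(** ** Continuity of [xi o M_cup phi] *)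

Definition MU_near {X : space} (c : MU X) (P : MU X -> Prop) : Prop :=
  exists l, Forall (MU_subbase X) l /\ Forall (fun W => W c) l /\
    forall y, Forall (fun W => W y) l -> P y.

Section Neighbourhoods.
Variables (X : space) (c : MU X).

Lemma MU_near_everywhere (P : MU X -> Prop) : (forall y, P y) -> MU_near c P.
Proof. intros H. exists nil. repeat split; auto. Qed.

Lemma MU_near_subbase (W P : MU X -> Prop) :
  MU_subbase X W -> W c -> (forall y, W y -> P y) -> MU_near c P.
Proof.
  intros HW Hc H. exists (W :: nil). repeat split; auto.
  intros y Hy. apply H, (Forall_inv Hy).
Qed.

Lemma MU_near_mono (P Q : MU X -> Prop) :
  MU_near c P -> (forall y, P y -> Q y) -> MU_near c Q.
Proof. intros [l [A [B C]]] H. exists l; auto. Qed.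

Lemma MU_near_and (P Q : MU X -> Prop) :
  MU_near c P -> MU_near c Q -> MU_near c (fun y => P y /\ Q y).
Proof.
  intros [l1 [A1 [B1 C1]]] [l2 [A2 [B2 C2]]].
  exists (l1 ++ l2). repeat split; try (apply Forall_app; auto);
    [apply C1|apply C2]; apply Forall_app in H; tauto.
Qed.

Lemma MU_near_all (P : nat -> MU X -> Prop) (l : list nat) :
  (forall i, In i l -> MU_near c (P i)) -> MU_near c (fun y => forall i, In i l -> P i y).
Proof.
  induction l as [|j l IH]; intros H.
  - apply MU_near_everywhere. intros y i [].
  - apply (MU_near_mono (fun y => P j y /\ forall i, In i l -> P i y)).
    + apply MU_near_and; [apply H; simpl; auto|apply IH; intros; apply H; simpl; auto].
    + intros y [h1 h2] i [<-|hi]; auto.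
Qed.

End Neighbourhoods.

Lemma cont_MU_to_I (X : space) (f : MU X -> I) :
  (forall c eps, 0 < eps ->
     MU_near c (fun y => Rabs (proj1_sig (f y) - proj1_sig (f c)) < eps)) ->
  cont (MU X) I f.
Proof.
  intros Hf V HV c Hc. destruct (HV _ Hc) as [eps [He H]].
  destruct (Hf c eps He) as [l [A [B C]]]. exists l; auto.
Qed.

Section SugenoContinuity.
Variables (X : space) (phi : X -> I).
Hypothesis Hphi : cont X I phi.

(* Lower semicontinuity: one subbasic set [{y | y(U) > a}] with [U] a strict
   superlevel set of [phi] suffices. *)
Lemma sugeno_lower_near (c : MU X) eps : 0 < eps ->
  MU_near c (fun y => sugeno phi (proj1_sig c) - eps < sugeno phi (proj1_sig y)).
Proof.
  intros He. set (v := sugeno phi (proj1_sig c)).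
  destruct (Rlt_le_dec (v - eps) 0) as [hv|hv].
  { apply MU_near_everywhere. intros y.
    pose proof (sugeno_range X phi _ (MU_bounded y)). lra. }
  destruct (sugeno_approx X phi _ (MU_bounded c) (v - eps / 2)) as [t [Ht Hlt]];
    [fold v; lra|].
  set (p := proj1_sig c (level phi t)) in *.
  pose proof (MU_bounded c (level phi t)) as Hp. fold p in Hp.
  set (t' := t - eps / 4).
  assert (Ht' : 0 < t' < t) by (unfold t'; nra).
  set (a := (v - eps) / t').
  assert (Hat : a * t' = v - eps) by (unfold a; field; lra).
  assert (Ha : 0 <= a < p).
  { split; [unfold a; apply Rmult_le_pos; [|apply Rlt_le, Rinv_0_lt_compat]; lra|].
    apply (Rmult_lt_reg_r t'); [lra|]. unfold t' in *. nra. }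
  set (U := fun x => t' < proj1_sig (phi x)).
  apply (MU_near_subbase X c (fun y => exists K, closed X K /\ subset K U /\ proj1_sig y K > a)).
  - right. exists U, a. split; [apply strict_level_open; auto|split; [lra|tauto]].
  - exists (level phi t). repeat split; [apply level_closed; auto| |fold p; lra].
    intros x hx. unfold U, level in *. lra.
  - intros y [K [HK [HKU HyK]]].
    assert (proj1_sig y K <= proj1_sig y (level phi t')).
    { apply (cap_mono X); auto using level_closed, cap_MU.
      intros x hx. apply HKU in hx. unfold U, level in *. lra. }
    pose proof (sugeno_ge X phi _ (MU_bounded y) t' ltac:(lra)). nra.
Qed.

Lemma cell_bound w b s h e :
  0 < s -> b * s = w -> 0 <= w <= 1 -> 0 <= h <= e * s -> b * (s + h) <= w + e.
Proof. intros Hs Hb Hw Hh. assert (0 <= b) by nra. assert (b * h <= e) by nra. nra. Qed.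

Lemma sugeno_grid_bound (y : MU X) w eps N : 0 < eps -> eps / 4 <= w <= 1 -> eps <= 1 ->
  (0 < N)%nat -> / INR N <= eps * eps / 16 ->
  (forall i, In i (seq 1 N) -> proj1_sig y (level phi (INR i / INR N)) < w / (INR i / INR N)) ->
  sugeno phi (proj1_sig y) <= w + eps / 4.
Proof.
  intros He Hw He1 HN Hh Hy. set (h := / INR N) in *.
  assert (Hh0 : 0 < h) by (apply Rinv_0_lt_compat, lt_0_INR; lia).
  apply sugeno_le; [apply MU_bounded|]. intros t Ht.
  pose proof (MU_bounded y (level phi t)) as Hyt.
  destruct (Rle_dec t (eps / 2)) as [ht|ht]; [nra|].
  destruct (grid_below N t HN) as [i [Hi [Hi1 Hi2]]]; [fold h; nra|].
  set (ti := INR i / INR N) in *. fold h in Hi2.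
  pose proof (grid_point_range N i Hi) as Hti. fold ti in Hti.
  specialize (Hy i Hi). fold ti in Hy.
  assert (Hmono : proj1_sig y (level phi t) <= proj1_sig y (level phi ti)).
  { apply (cap_mono X); auto using level_closed, cap_MU, level_antitone. }
  assert (Hcell : w / ti * (ti + h) <= w + eps / 4).
  { assert (eps / 4 <= ti) by nra.
    apply cell_bound; [lra|field; lra|lra|split; nra]. }
  pose proof (MU_bounded y (level phi ti)). nra.
Qed.

(* Upper semicontinuity: finitely many subbasic sets [{y | y(L_{i/N}) < b_i}]
   control [y(L_t) * t] on every grid cell. *)
Lemma sugeno_upper_near (c : MU X) eps : 0 < eps ->
  MU_near c (fun y => sugeno phi (proj1_sig y) < sugeno phi (proj1_sig c) + eps).
Proof.
  intros He. set (v := sugeno phi (proj1_sig c)).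
  pose proof (sugeno_range X phi _ (MU_bounded c)) as Hv. fold v in Hv.
  destruct (Rlt_le_dec 1 (v + eps)) as [hv|hv].
  { apply MU_near_everywhere. intros y.
    pose proof (sugeno_range X phi _ (MU_bounded y)). lra. }
  destruct (fine_grid (eps * eps / 16)) as [N [HN Hh]]; [nra|].
  set (ti := fun i : nat => INR i / INR N).
  set (bi := fun i : nat => (v + eps / 4) / ti i).
  apply (MU_near_mono X c
    (fun y => forall i, In i (seq 1 N) -> proj1_sig y (level phi (ti i)) < bi i)).
  - apply MU_near_all. intros i Hi.
    pose proof (grid_point_range N i Hi) as Hti. fold (ti i) in Hti.
    pose proof (sugeno_ge X phi _ (MU_bounded c) (ti i) Hti). fold v in H.
    assert (Hbti : bi i * ti i = v + eps / 4) by (unfold bi; field; lra).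
    assert (Hc : proj1_sig c (level phi (ti i)) < bi i) by nra.
    destruct (Rle_dec (bi i) 1) as [hb|hb].
    + apply (MU_near_subbase X c (fun y => proj1_sig y (level phi (ti i)) < bi i)); auto.
      left. exists (level phi (ti i)), (bi i).
      repeat split; auto; [apply level_closed; auto|nra].
    + apply MU_near_everywhere. intros y. pose proof (MU_bounded y (level phi (ti i))). lra.
  - intros y Hy.
    pose proof (sugeno_grid_bound y (v + eps / 4) eps N He ltac:(lra) ltac:(lra) HN Hh Hy).
    lra.
Qed.

End SugenoContinuity.

Lemma xiM_cont (X : space) (phi : X -> I) : cont X I phi -> cont (MU X) I (xiM X phi).
Proof.
  intros Hphi. apply cont_MU_to_I. intros c eps He.
  eapply MU_near_mono;
    [apply MU_near_and; [apply sugeno_lower_near|apply sugeno_upper_near]; eauto|].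
  intros y [H1 H2]. rewrite !xiM_sugeno. apply Rabs_def1; lra.
Qed.

(* [xi (eta x)] is [sup {t | 0 < t <= x}] (or [0] when [x = 0]), i.e. [x]. *)
Lemma eta_law (x : I) : xi_r (eta I x) = x.
Proof.
  apply I_eq. set (g := fun t => eta I x (fun r : I => t <= proj1_sig r)).
  assert (Hg : forall t, 0 < t <= 1 -> 0 <= g t <= 1).
  { intros t _. unfold g, eta. destruct excluded_middle_informative; lra. }
  change (clamp (wsup g) = proj1_sig x). rewrite clamp_id by (apply wsup_range; auto).
  destruct x as [r Hr]; simpl. apply Rle_antisym.
  - apply wsup_le; auto. intros t Ht. unfold g, eta.
    destruct excluded_middle_informative as [h|h]; simpl in *; lra.
  - destruct (Req_dec r 0) as [->|hr]; [apply wsup_range; auto|].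
    replace r with (g r * r) at 1; [apply wsup_ge; auto; lra|].
    unfold g, eta. destruct excluded_middle_informative as [h|h]; simpl in *; lra.
Qed.

Lemma MU_top (X : space) : is_topology (MU X).
Proof. exact (gen_op_topology (MU_subbase X)). Qed.

Lemma MU_open (X : space) (U : MU X -> Prop) : (forall c, U c -> MU_near c U) -> op (MU X) U.
Proof. exact (fun H => H). Qed.

Lemma Ft_closed (X : space) F t : closed X F -> 0 < t -> closed (MU X) (Ft X F t).
Proof.
  intros HF Ht. apply MU_open. intros c Hc.
  destruct (Rle_dec t 1) as [h|h].
  - apply (MU_near_subbase X c (fun y : MU X => proj1_sig y F < t)).
    + left. exists F, t. repeat split; auto; lra.
    + unfold Ft in Hc. lra.
    + intros y hy. unfold Ft. lra.
  - apply MU_near_everywhere. intros y. unfold Ft. pose proof (MU_bounded y F). lra.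
Qed.

Section FiniteUnions.
Variables (Y : space) (J : Type) (A : J -> Y -> Prop).
Hypothesis HY : is_topology Y.

Definition finite_union (l : list J) : Y -> Prop := fun y => exists j, In j l /\ A j y.

Lemma finite_union_nil : finite_union nil = (fun _ => False).
Proof. apply pext. intros y; split; [intros [j [[] _]]|intros []]. Qed.

Lemma finite_union_cons j l :
  finite_union (j :: l) = (fun y => A j y \/ finite_union l y).
Proof.
  apply pext; intro y; unfold finite_union; simpl; split.
  - intros [i [[<-|hi] hy]]; [left|right; exists i]; auto.
  - intros [hy|[i [hi hy]]]; eauto.
Qed.

Lemma closed_finite_union l : (forall j, In j l -> closed Y (A j)) -> closed Y (finite_union l).
Proof.
  induction l as [|j l IH]; intros H.
  - rewrite finite_union_nil. apply closed_empty; auto.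
  - rewrite finite_union_cons. apply closed_union; auto; [apply H|apply IH; intros; apply H];
      simpl; auto.
Qed.

Lemma poss_finite_union nu l M : is_poss_capacity Y nu ->
  (forall j, In j l -> closed Y (A j)) -> 0 <= M ->
  (forall j, In j l -> nu (A j) <= M) -> nu (finite_union l) <= M.
Proof.
  intros Hnu. induction l as [|j l IH]; intros Hc HM Hb.
  - rewrite finite_union_nil, (proj1 (proj2 (proj2 (proj1 Hnu)))). exact HM.
  - rewrite finite_union_cons, (proj2 Hnu); [|apply Hc; simpl; auto|].
    + apply Rmax_lub; [apply Hb; simpl; auto|].
      apply IH; auto; intros; [apply Hc|apply Hb]; simpl; auto.
    + apply closed_finite_union. intros; apply Hc; simpl; auto.
Qed.

End FiniteUnions.

Arguments finite_union {Y J} A l.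

(** ** The multiplication law *)

Lemma mu_bullet_bounded (X : space) (Cn : (MU X -> Prop) -> R) :
  bounded01 Cn -> bounded01 (mu_bullet X Cn).
Proof. intros H F. apply (wsup_range (fun t => Cn (Ft X F t))). intros; apply H. Qed.

Lemma le_of_slack a r Q : 0 <= a <= 1 -> 0 < r ->
  (forall eta, 0 < eta < r -> a * (r - eta) <= Q) -> a * r <= Q.
Proof.
  intros Ha Hr H. apply Rnot_lt_le. intros Hlt.
  set (eta := Rmin (r / 2) ((a * r - Q) / 2)).
  assert (eta <= r / 2) by apply Rmin_l. assert (eta <= (a * r - Q) / 2) by apply Rmin_r.
  assert (0 < eta) by (apply Rmin_pos; lra).
  specialize (H eta ltac:(lra)). nra.
Qed.

Section MultiplicationLaw.
Variables (X : space) (phi : X -> I).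
Hypothesis Hphi : cont X I phi.

Lemma xiM_level_closed r : closed (MU X) (level (xiM X phi) r).
Proof. apply level_closed, xiM_cont, Hphi. Qed.

Lemma Ft_level_sub s t : 0 < s <= 1 ->
  subset (Ft X (level phi s) t) (level (xiM X phi) (t * s)).
Proof.
  intros Hs c hc. unfold Ft in hc. unfold level. rewrite xiM_sugeno.
  pose proof (sugeno_ge X phi _ (MU_bounded c) s Hs). nra.
Qed.

Lemma level_cover r eta : 0 < r <= 1 -> 0 < eta < r ->
  exists l : list (R * R),
    (forall p, In p l -> 0 < fst p <= 1 /\ 0 < snd p /\ r - eta <= snd p * fst p) /\
    subset (level (xiM X phi) r) (finite_union (fun p => Ft X (level phi (fst p)) (snd p)) l).
Proof.
  intros Hr He. set (r' := r - eta / 2).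
  destruct (fine_grid (Rmin (eta / 4) (r' / 2))) as [N [HN Hh]];
    [apply Rmin_pos; unfold r'; lra|].
  set (h := / INR N) in *.
  pose proof (Rmin_l (eta / 4) (r' / 2)). pose proof (Rmin_r (eta / 4) (r' / 2)).
  assert (Hh0 : 0 < h) by (apply Rinv_0_lt_compat, lt_0_INR; lia).
  set (si := fun i : nat => INR i / INR N).
  set (pair := fun i : nat => (si i, r' / (si i + h))).
  set (big := fun i : nat => if Rle_dec (r' / 2) (si i) then true else false).
  exists (map pair (filter big (seq 1 N))). split.
  - intros p Hp. apply in_map_iff in Hp. destruct Hp as [i [<- Hi]].
    apply filter_In in Hi. destruct Hi as [Hi Hbig].
    pose proof (grid_point_range N i Hi) as Hsi. fold (si i) in Hsi.
    unfold big in Hbig. destruct Rle_dec as [hs|]; [|discriminate].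
    unfold pair; simpl. split; [auto|split; [apply Rdiv_lt_0_compat; unfold r'; lra|]].
    apply (Rmult_le_reg_r (si i + h)); [lra|].
    replace (r' / (si i + h) * si i * (si i + h)) with (r' * si i) by (field; lra).
    unfold r' in *. nra.
  - intros c Hc. unfold level in Hc. rewrite xiM_sugeno in Hc.
    destruct (sugeno_approx X phi _ (MU_bounded c) r') as [s [Hs Hlt]]; [unfold r'; lra|].
    pose proof (MU_bounded c (level phi s)) as Hcs.
    destruct (grid_below N s HN) as [i [Hi [Hi1 Hi2]]]; [fold h; unfold r' in *; nra|].
    fold h (si i) in Hi1, Hi2.
    pose proof (grid_point_range N i Hi) as Hsi. fold (si i) in Hsi.
    assert (Hbig : r' / 2 <= si i) by (unfold r' in *; nra).
    exists (pair i). split.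
    + apply in_map, filter_In. split; auto. unfold big. destruct Rle_dec; auto.
    + unfold pair, Ft; simpl.
      assert (proj1_sig c (level phi s) <= proj1_sig c (level phi (si i))).
      { apply (cap_mono X); auto using level_closed, cap_MU, level_antitone. }
      apply Rle_ge, (Rmult_le_reg_r (si i + h)); [lra|].
      replace (r' / (si i + h) * (si i + h)) with r' by (field; lra). nra.
Qed.

Variable Cn : (MU X -> Prop) -> R.
Hypothesis HCn : is_poss_capacity (MU X) Cn.

Let Cn_cap : is_capacity (MU X) Cn := proj1 HCn.
Let Cn_bounded : bounded01 Cn := cap_bounded _ _ Cn_cap.

Lemma mult_law_le : sugeno phi (mu_bullet X Cn) <= sugeno (xiM X phi) Cn.
Proof.
  set (P := sugeno (xiM X phi) Cn).
  apply sugeno_le; [apply mu_bullet_bounded, Cn_bounded|]. intros s Hs.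
  assert (mu_bullet X Cn (level phi s) <= P / s); [|apply (Rmult_le_compat_r s) in H; [|lra];
    replace (P / s * s) with P in H by (field; lra); exact H].
  apply (wsup_le (fun t => Cn (Ft X (level phi s) t))); [intros; apply Cn_bounded|].
  intros t Ht. apply (Rmult_le_reg_r s); [lra|].
  replace (P / s * s) with P by (field; lra).
  assert (Cn (Ft X (level phi s) t) <= Cn (level (xiM X phi) (t * s))).
  { apply (cap_mono (MU X)); auto using Cn_cap, Ft_level_sub, xiM_level_closed.
    apply Ft_closed; [apply level_closed; auto|lra]. }
  assert (Cn (level (xiM X phi) (t * s)) * (t * s) <= P)
    by (apply sugeno_ge; [apply Cn_bounded|nra]).
  rewrite Rmult_assoc. eapply Rle_trans; [|eassumption].
  apply Rmult_le_compat_r; [nra|auto].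
Qed.

Lemma Ft_level_bound s t : 0 < s <= 1 -> 0 < t ->
  Cn (Ft X (level phi s) t) * (t * s) <= sugeno phi (mu_bullet X Cn).
Proof.
  intros Hs Ht. pose proof (Cn_bounded (Ft X (level phi s) t)).
  pose proof (sugeno_range X phi _ (mu_bullet_bounded X Cn Cn_bounded)).
  destruct (Rle_dec t 1) as [ht|ht].
  - assert (Cn (Ft X (level phi s) t) * t <= mu_bullet X Cn (level phi s))
      by (apply (wsup_ge (fun t => Cn (Ft X (level phi s) t))); [intros; apply Cn_bounded|lra]).
    assert (mu_bullet X Cn (level phi s) * s <= sugeno phi (mu_bullet X Cn))
      by (apply sugeno_ge; [apply mu_bullet_bounded, Cn_bounded|auto]).
    rewrite <- Rmult_assoc. eapply Rle_trans; [|eassumption].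
    apply Rmult_le_compat_r; lra.
  - (* for [t > 1] the set [F_t(L_s)] is empty *)
    assert (Hempty : Cn (Ft X (level phi s) t) <= Cn (fun _ => False)).
    { apply (cap_mono (MU X)); auto using Cn_cap, closed_empty, MU_top.
      - apply Ft_closed; [apply level_closed; auto|lra].
      - intros c hc. unfold Ft in hc. pose proof (MU_bounded c (level phi s)). lra. }
    rewrite (proj1 (proj2 (proj2 Cn_cap))) in Hempty.
    replace (Cn (Ft X (level phi s) t)) with 0 by lra. lra.
Qed.

Lemma mult_law_ge : sugeno (xiM X phi) Cn <= sugeno phi (mu_bullet X Cn).
Proof.
  set (Q := sugeno phi (mu_bullet X Cn)).
  pose proof (sugeno_range X phi _ (mu_bullet_bounded X Cn Cn_bounded)) as HQ. fold Q in HQ.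
  apply sugeno_le; [apply Cn_bounded|]. intros r Hr.
  apply le_of_slack; [apply Cn_bounded|lra|]. intros eta He.
  destruct (level_cover r eta Hr He) as [l [Hl Hcov]].
  set (A := fun p : R * R => Ft X (level phi (fst p)) (snd p)).
  assert (HA : forall p, In p l -> closed (MU X) (A p)).
  { intros p Hp. destruct (Hl p Hp) as [? [? ?]]. apply Ft_closed; auto. apply level_closed; auto. }
  assert (Cn (level (xiM X phi) r) <= Q / (r - eta)).
  { eapply Rle_trans.
    - apply (cap_mono (MU X)); [apply Cn_cap|apply xiM_level_closed| |exact Hcov].
      apply closed_finite_union; auto using MU_top.
    - apply poss_finite_union; auto using MU_top.
      + apply Rmult_le_pos; [lra|apply Rlt_le, Rinv_0_lt_compat; lra].
      + intros p Hp. destruct (Hl p Hp) as [Hs [Ht Hts]].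
        pose proof (Ft_level_bound (fst p) (snd p) Hs Ht).
        pose proof (Cn_bounded (A p)).
        apply (Rmult_le_reg_r (r - eta)); [lra|].
        replace (Q / (r - eta) * (r - eta)) with Q by (field; lra).
        eapply Rle_trans; [|eassumption]. apply Rmult_le_compat_l; [apply H0|exact Hts]. }
  apply (Rmult_le_compat_r (r - eta)) in H; [|lra].
  replace (Q / (r - eta) * (r - eta)) with Q in H by (field; lra). exact H.
Qed.

End MultiplicationLaw.

Lemma mult_law (X : space) (phi : X -> I) (C : MU (MU X)) : cont X I phi ->
  xi_r (push (xiM X phi) (proj1_sig C)) = xi_r (push phi (mu_bullet X (proj1_sig C))).
Proof.
  intros Hphi. rewrite !xi_r_sugeno. f_equal.
  apply Rle_antisym; [apply mult_law_ge|apply mult_law_le]; auto; apply (proj2_sig C).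
Qed.

Lemma separate_finite (X : space) (P : (X -> Prop) -> Prop) (Ns : X -> Prop)
    (l : list (X -> Prop)) :
  is_topology X -> P (fun _ => True) -> (forall U1 U2, P U1 -> P U2 -> P (fun x => U1 x /\ U2 x)) ->
  Forall (fun W => W = Ns \/ exists U, op X U /\ P U /\ op X W /\ (forall z, ~ (U z /\ W z))) l ->
  exists U V, op X U /\ P U /\ op X V /\ (forall z, ~ (U z /\ V z)) /\
    (forall z, (exists W, In W l /\ W z) -> Ns z \/ V z).
Proof.
  intros HT HP1 HP2. induction l as [|W l IH]; intros Hl.
  - exists (fun _ => True), (fun _ => False).
    repeat split; auto using op_const; [intros z [_ []]|intros z [W [[] _]]].
  - pose proof (Forall_inv Hl) as H1. apply Forall_inv_tail in Hl.
    destruct (IH Hl) as [U [V [HU [HPU [HV [Hd Hc]]]]]].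
    destruct H1 as [->|[U' [HU' [HPU' [HW Hd']]]]].
    + exists U, V. repeat split; auto. intros z [W' [[<-|hin] hz]]; [left; auto|apply Hc; eauto].
    + exists (fun x => U x /\ U' x), (fun x => V x \/ W x).
      repeat split; auto using op_inter2, op_union2.
      * intros z [[h1 h2] [h3|h3]]; [apply (Hd z)|apply (Hd' z)]; auto.
      * intros z [W' [[<-|hin] hz]]; [right; right; auto|].
        destruct (Hc z (ex_intro _ W' (conj hin hz))); auto.
Qed.

Lemma separate_point_closed (X : space) (B : X -> Prop) x : compactum X -> closed X B -> ~ B x ->
  exists U V, op X U /\ U x /\ op X V /\ subset B V /\ (forall z, ~ (U z /\ V z)).
Proof.
  intros [HT [Hcp Hh]] HB Hx.
  set (Fm := fun W : X -> Prop => W = (fun y => ~ B y) \/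
               exists U, op X U /\ U x /\ op X W /\ (forall z, ~ (U z /\ W z))).
  destruct (Hcp Fm) as [l [Hl Hcov]].
  - intros W [->|[U [_ [_ [HW _]]]]]; auto.
  - intros y. destruct (classic (B y)) as [hy|hy].
    + assert (x <> y) by (intros ->; auto).
      destruct (Hh x y H) as [U [V [HU [HV [HUx [HVy Hd]]]]]].
      exists V. split; auto. right. exists U. auto.
    + exists (fun y => ~ B y). split; auto. left; auto.
  - destruct (separate_finite X (fun U => U x) (fun y => ~ B y) l HT Logic.I
                (fun U1 U2 h1 h2 => conj h1 h2) Hl) as [U [V [HU [HUx [HV [Hd Hc]]]]]].
    exists U, V. repeat split; auto. intros z hz. destruct (Hc z (Hcov z)); tauto.
Qed.

Lemma separate_closed (X : space) (A B : X -> Prop) : compactum X -> closed X A -> closed X B ->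
  (forall z, ~ (A z /\ B z)) ->
  exists U V, op X U /\ op X V /\ subset A U /\ subset B V /\ (forall z, ~ (U z /\ V z)).
Proof.
  intros HX HA HB HAB. pose proof HX as [HT [Hcp Hh]].
  set (Fm := fun W : X -> Prop => W = (fun y => ~ A y) \/
               exists V, op X V /\ subset B V /\ op X W /\ (forall z, ~ (V z /\ W z))).
  destruct (Hcp Fm) as [l [Hl Hcov]].
  - intros W [->|[U [_ [_ [HW _]]]]]; auto.
  - intros y. destruct (classic (A y)) as [hy|hy].
    + assert (~ B y) by (intro; apply (HAB y); auto).
      destruct (separate_point_closed X B y HX HB H) as [U [V [HU [HUy [HV [HBV Hd]]]]]].
      exists U. split; auto. right. exists V. repeat split; auto.
      intros z [h1 h2]; apply (Hd z); auto.
    + exists (fun y => ~ A y). split; auto. left; auto.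
  - destruct (separate_finite X (fun V => subset B V) (fun y => ~ A y) l HT (fun _ _ => Logic.I)
                (fun U1 U2 h1 h2 z hz => conj (h1 z hz) (h2 z hz)) Hl)
      as [U [V [HU [HUx [HV [Hd Hc]]]]]].
    exists V, U. repeat split; auto.
    + intros z hz. destruct (Hc z (Hcov z)); tauto.
    + intros z [h1 h2]; apply (Hd z); auto.
Qed.

Lemma shrink_neighbourhood (X : space) (K V : X -> Prop) : compactum X -> closed X K -> op X V ->
  subset K V ->
  exists V' K', op X V' /\ closed X K' /\ subset K V' /\ subset V' K' /\ subset K' V.
Proof.
  intros HX HK HV HKV.
  destruct (separate_closed X K (fun x => ~ V x) HX HK (closed_compl X V HV))
    as [P [Q [HP [HQ [HKP [HVQ Hd]]]]]]; [intros z [h1 h2]; auto|].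
  exists P, (fun x => ~ Q x). repeat split; auto using closed_compl.
  - intros z hz hq. apply (Hd z); auto.
  - intros z hz. apply NNPP; intro hv. apply hz, HVQ, hv.
Qed.

Definition dv (n k : nat) : R := INR k / INR (2 ^ n).

Lemma pow2_pos n : 0 < INR (2 ^ n).
Proof. apply lt_0_INR. apply Nat.neq_0_lt_0, Nat.pow_nonzero. lia. Qed.

Lemma dv_cross n k m j : dv n k < dv m j -> (k * 2 ^ m < j * 2 ^ n)%nat.
Proof.
  unfold dv. intros H. pose proof (pow2_pos n). pose proof (pow2_pos m).
  apply INR_lt. rewrite !mult_INR.
  apply (Rmult_lt_compat_r (INR (2 ^ n) * INR (2 ^ m))) in H; [|nra].
  replace (INR k / INR (2 ^ n) * (INR (2 ^ n) * INR (2 ^ m))) with (INR k * INR (2 ^ m)) in H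
    by (field; lra).
  replace (INR j / INR (2 ^ m) * (INR (2 ^ n) * INR (2 ^ m))) with (INR j * INR (2 ^ n)) in H
    by (field; lra).
  exact H.
Qed.

Lemma dv_cross_eq n k m j : dv n k = dv m j -> (k * 2 ^ m = j * 2 ^ n)%nat.
Proof.
  unfold dv. intros H. pose proof (pow2_pos n). pose proof (pow2_pos m).
  apply INR_eq. rewrite !mult_INR.
  replace (INR k) with (INR k / INR (2 ^ n) * INR (2 ^ n)) by (field; lra).
  replace (INR j) with (INR j / INR (2 ^ m) * INR (2 ^ m)) by (field; lra).
  rewrite H. ring.
Qed.

Lemma dv_range n k : (k <= 2 ^ n)%nat -> 0 <= dv n k <= 1.
Proof.
  intros H. pose proof (pow2_pos n). unfold dv. split.
  - apply Rmult_le_pos; [apply pos_INR|left; apply Rinv_0_lt_compat; lra].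
  - apply (Rmult_le_reg_r (INR (2 ^ n))); [lra|].
    replace (INR k / INR (2 ^ n) * INR (2 ^ n)) with (INR k) by (field; lra).
    rewrite Rmult_1_l. apply le_INR; auto.
Qed.

Lemma dyadic_between a b : 0 <= a < b -> b <= 1 -> exists n k, (k <= 2 ^ n)%nat /\ a < dv n k < b.
Proof.
  intros Hab Hb1. destruct (exists_big (1 / (b - a))) as [n Hn].
  assert (Hn2 : INR n < INR (2 ^ n)) by (apply lt_INR, Nat.pow_gt_lin_r; lia).
  set (D := INR (2 ^ n)). pose proof (pow2_pos n) as HD. fold D in HD, Hn2.
  assert (HD1 : 1 < D * (b - a)).
  { assert (1 / (b - a) < D) by lra.
    apply (Rmult_lt_compat_r (b - a)) in H; [|lra].
    replace (1 / (b - a) * (b - a)) with 1 in H by (field; lra). lra. }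
  destruct (exists_floor (a * D)) as [m [Hm1 Hm2]]; [nra|].
  assert (Hk : INR (S m) < b * D) by (rewrite S_INR; nra).
  exists n, (S m). split.
  - assert (INR (S m) < INR (2 ^ n)) by (fold D; nra). apply INR_lt in H. lia.
  - unfold dv; fold D.
    replace (INR (S m) / D) with (INR (S m) * / D) by reflexivity.
    split; apply (Rmult_lt_reg_r D); try lra;
      rewrite Rmult_assoc, Rinv_l, Rmult_1_r by lra; rewrite ?S_INR; lra.
Qed.

(** ** Urysohn's lemma for compacta *)

Definition prec (X : space) (A B : X -> Prop) : Prop :=
  exists K V, closed X K /\ op X V /\ subset A K /\ subset K V /\ subset V B.

Lemma prec_trans (X : space) A B C : prec X A B -> prec X B C -> prec X A C.
Proof.
  intros [K1 [V1 [? [? [? [? ?]]]]]] [K2 [V2 [? [? [? [? ?]]]]]].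
  exists K1, V2. repeat split; auto. intros x hx; auto.
Qed.

Lemma prec_sub (X : space) A B : prec X A B -> subset A B.
Proof. intros [K [V [? [? [? [? ?]]]]]] x hx; auto. Qed.

Definition interp (X : space) (A B : X -> Prop) : X -> Prop :=
  epsilon (inhabits A) (fun C => prec X A C /\ prec X C B).

Lemma interp_spec (X : space) A B : compactum X -> prec X A B ->
  prec X A (interp X A B) /\ prec X (interp X A B) B.
Proof.
  intros HX [K [V [HK [HV [HAK [HKV HVB]]]]]]. unfold interp. apply epsilon_spec.
  destruct (shrink_neighbourhood X K V HX HK HV HKV) as [V' [K' [HV' [HK' [H1 [H2 H3]]]]]].
  exists V'. split.
  - exists K, V'. repeat split; auto. intros x hx; auto.
  - exists K', V. repeat split; auto.
Qed.

Section Urysohn.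
Variables (X : space) (F0 Op : X -> Prop).
Hypothesis HX : compactum X.
Hypothesis H0 : prec X F0 Op.

Let HT : is_topology X := proj1 HX.

(* [G n k] plays the role of [{phi >= 1 - k/2^n}]; consecutive sets are well
   inside each other. *)
Fixpoint G (n k : nat) : X -> Prop :=
  match n with
  | O => if Nat.eqb k 0 then F0 else Op
  | S n' => if Nat.even k then G n' (Nat.div2 k)
            else interp X (G n' (Nat.div2 k)) (G n' (S (Nat.div2 k)))
  end.

Lemma G_S n k : G (S n) k =
  if Nat.even k then G n (Nat.div2 k) else interp X (G n (Nat.div2 k)) (G n (S (Nat.div2 k))).
Proof. reflexivity. Qed.

Lemma G_double n k : G (S n) (2 * k) = G n k.
Proof. rewrite G_S, Nat.even_even, Nat.div2_double. reflexivity. Qed.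

Lemma G_consec n k : (k < 2 ^ n)%nat -> prec X (G n k) (G n (S k)).
Proof.
  revert k. induction n as [|n IH]; intros k Hk.
  - simpl in Hk. assert (k = 0%nat) by lia. subst. exact H0.
  - destruct (Nat.Even_or_Odd k) as [[m ->]|[m ->]].
    + rewrite G_double, G_S, Nat.even_succ, Nat.odd_mul, Nat.div2_succ_double. simpl Nat.odd.
      apply interp_spec; auto. apply IH. simpl in Hk. lia.
    + replace (S (2 * m + 1)) with (2 * S m)%nat by lia. rewrite G_double.
      rewrite G_S, Nat.even_odd, Nat.add_1_r, Nat.div2_succ_double.
      apply interp_spec; auto. apply IH. simpl in Hk. lia.
Qed.

Lemma G_refine p n k : G (n + p) (k * 2 ^ p) = G n k.
Proof.
  induction p as [|p IH].
  - rewrite Nat.add_0_r, Nat.pow_0_r, Nat.mul_1_r. reflexivity.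
  - rewrite Nat.add_succ_r, Nat.pow_succ_r', <- IH.
    replace (k * (2 * 2 ^ p))%nat with (2 * (k * 2 ^ p))%nat by lia. apply G_double.
Qed.

Lemma G_same_level N k j : (k < j)%nat -> (j <= 2 ^ N)%nat -> prec X (G N k) (G N j).
Proof.
  induction j as [|j IH]; intros H1 H2; [lia|].
  destruct (Nat.eq_dec k j) as [->|hne].
  - apply G_consec; lia.
  - apply prec_trans with (G N j); [apply IH; lia|apply G_consec; lia].
Qed.

Lemma G_lt n k m j : (j <= 2 ^ m)%nat -> dv n k < dv m j -> prec X (G n k) (G m j).
Proof.
  intros Hj Hd. apply dv_cross in Hd.
  rewrite <- (G_refine m n k), <- (G_refine n m j), (Nat.add_comm m n).
  apply G_same_level; auto. rewrite Nat.pow_add_r, (Nat.mul_comm (2 ^ n)).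
  apply Nat.mul_le_mono_r; auto.
Qed.

Lemma G_le n k m j : (j <= 2 ^ m)%nat -> dv n k <= dv m j -> subset (G n k) (G m j).
Proof.
  intros Hj [Hd|Hd].
  - apply prec_sub, G_lt; auto.
  - apply dv_cross_eq in Hd.
    rewrite <- (G_refine m n k), <- (G_refine n m j), (Nat.add_comm m n), Hd.
    intros x hx; exact hx.
Qed.

Definition levels (x : X) : R -> Prop :=
  fun s => s = 0 \/ exists n k, (k <= 2 ^ n)%nat /\ G n k x /\ s = 1 - dv n k.

Definition ury (x : X) : R := Rsup (levels x).

Lemma ury_lub x : is_lub (levels x) (ury x).
Proof.
  apply Rsup_lub; [exists 0; left; auto|exists 1].
  intros s [->|[n [k [Hk [_ ->]]]]]; [lra|]. pose proof (dv_range n k Hk); lra.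
Qed.

Lemma ury_ge n k x : (k <= 2 ^ n)%nat -> G n k x -> 1 - dv n k <= ury x.
Proof. intros Hk Hx. apply (sup_ge _ _ _ (ury_lub x)). right. exists n, k. auto. Qed.

Lemma ury_range x : 0 <= ury x <= 1.
Proof.
  split; [apply (sup_ge _ _ _ (ury_lub x)); left; auto|].
  apply (sup_le _ _ _ (ury_lub x)).
  intros s [->|[n [k [Hk [_ ->]]]]]; [lra|]. pose proof (dv_range n k Hk); lra.
Qed.

Lemma ury_lower_near x eps : 0 < eps ->
  exists N, op X N /\ N x /\ forall y, N y -> ury x - eps < ury y.
Proof.
  intros He. destruct (Rlt_le_dec (ury x - eps) 0) as [h|h].
  { exists (fun _ => True). split; [apply (proj1 HT)|split; auto].
    intros y _. pose proof (ury_range y); lra. }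
  destruct (sup_approx _ _ (ury x - eps) (ury_lub x)) as [s [[->|[n [k [Hk [Hgk ->]]]]] Hs]];
    [lra|lra|].
  pose proof (dv_range n k Hk). pose proof (ury_range x).
  destruct (dyadic_between (dv n k) (1 - (ury x - eps))) as [n' [k' [Hk' Hd]]]; [lra|lra|].
  destruct (G_lt n k n' k' Hk' (proj1 Hd)) as [K [W [HK [HW [HGK [HKW HWG]]]]]].
  exists W. repeat split; auto. intros y hy.
  pose proof (ury_ge n' k' y Hk' (HWG y hy)). lra.
Qed.

Lemma ury_upper_near x eps : 0 < eps ->
  exists N, op X N /\ N x /\ forall y, N y -> ury y < ury x + eps.
Proof.
  intros He. pose proof (ury_range x).
  destruct (Rlt_le_dec 1 (ury x + eps)) as [h|h].
  { exists (fun _ => True). split; [apply (proj1 HT)|split; auto].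
    intros y _. pose proof (ury_range y); lra. }
  destruct (dyadic_between (1 - ury x - eps / 2) (1 - ury x)) as [n1 [k1 [Hk1 Hd1]]]; [lra|lra|].
  pose proof (dv_range n1 k1 Hk1).
  destruct (dyadic_between (dv n1 k1) (1 - ury x)) as [n2 [k2 [Hk2 Hd2]]]; [lra|lra|].
  destruct (G_lt n1 k1 n2 k2 Hk2 (proj1 Hd2)) as [K [W [HK [HW [HGK [HKW HWG]]]]]].
  exists (fun z => ~ K z). split; [exact HK|split].
  - intro hK. pose proof (ury_ge n2 k2 x Hk2 (HWG x (HKW x hK))). lra.
  - intros y hy. assert (ury y <= ury x + eps / 2); [|lra].
    apply (sup_le _ _ _ (ury_lub y)). intros s [->|[n [k [Hk [Hgk ->]]]]]; [lra|].
    destruct (Rle_dec (dv n k) (dv n1 k1)) as [hd|hd]; [|lra].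
    exfalso. apply hy, HGK, (G_le n k n1 k1 Hk1 hd), Hgk.
Qed.

Lemma ury_cont : cont X I (fun x => toI (ury x)).
Proof.
  assert (Hg : forall x, proj1_sig (toI (ury x)) = ury x) by (intro; apply clamp_id, ury_range).
  intros V HV. apply op_local; auto. intros x Hx.
  destruct (HV _ Hx) as [eps [He HVe]]. rewrite Hg in HVe.
  destruct (ury_lower_near x eps He) as [N1 [HN1 [Hx1 H1]]].
  destruct (ury_upper_near x eps He) as [N2 [HN2 [Hx2 H2]]].
  exists (fun y => N1 y /\ N2 y). repeat split; auto using op_inter2.
  intros y [h1 h2]. apply HVe. rewrite Hg.
  specialize (H1 y h1). specialize (H2 y h2). apply Rabs_def1; lra.
Qed.

Lemma ury_one x : F0 x -> ury x = 1.
Proof.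
  intros hx. apply Rle_antisym; [apply ury_range|].
  replace 1 with (1 - dv 0 0) by (unfold dv; simpl; field).
  apply ury_ge; [simpl; lia|exact hx].
Qed.

Lemma ury_support x : 0 < ury x -> Op x.
Proof.
  intros hx.
  destruct (sup_approx _ _ 0 (ury_lub x) hx) as [s [[->|[n [k [Hk [Hgk ->]]]]] Hs]]; [lra|].
  assert (Hd : dv n k < dv 0 1) by (unfold dv at 2; simpl; lra).
  exact (prec_sub _ _ _ (G_lt n k 0 1 ltac:(simpl; lia) Hd) x Hgk).
Qed.

End Urysohn.

Lemma urysohn (X : space) (F0 Op : X -> Prop) : compactum X -> closed X F0 -> op X Op ->
  subset F0 Op ->
  exists phi : X -> I, cont X I phi /\ (forall x, F0 x -> proj1_sig (phi x) = 1) /\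
     (forall x, 0 < proj1_sig (phi x) -> Op x).
Proof.
  intros HX HF HO HFO.
  assert (H0 : prec X F0 Op) by (exists F0, Op; repeat split; auto; intros x hx; auto).
  exists (fun x => toI (ury X F0 Op x)). split; [apply ury_cont; auto|split]; intros x hx;
    simpl in *; rewrite clamp_id in * by (apply ury_range; auto).
  - apply ury_one; auto.
  - apply (ury_support X F0 Op HX H0); auto.
Qed.

(** ** Separation of points of [M_cup X] *)

(* If [c(A) < c'(A)] for a closed [A], choose [a] in between, an open [O ⊇ A]
   on whose closed subsets [c] stays below [a], and a Urysohn function [phi]
   equal to [1] on [A] and supported in [O]: then
   [xi (M_cup phi c) <= a < c'(A) <= xi (M_cup phi c')]. *)
Lemma separate_on_closed (X : space) (c c' : MU X) A : compactum X -> closed X A ->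
  proj1_sig c A < proj1_sig c' A ->
  exists phi : X -> I, cont X I phi /\ proj1_sig (xiM X phi c) < proj1_sig (xiM X phi c').
Proof.
  intros HX HA Hlt. set (a := (proj1_sig c A + proj1_sig c' A) / 2).
  pose proof (MU_bounded c A). pose proof (MU_bounded c' A).
  destruct (cap_outer X _ A a (cap_MU c) HA) as [O [HO [HAO HB]]]; [unfold a; lra|unfold a; lra|].
  destruct (urysohn X A O HX HA HO HAO) as [phi [Hphi [H1 H2]]].
  exists phi. split; auto. rewrite !xiM_sugeno.
  assert (sugeno phi (proj1_sig c) <= a).
  { apply sugeno_le; [apply MU_bounded|]. intros t Ht.
    assert (proj1_sig c (level phi t) < a).
    { apply HB; [apply level_closed; auto|]. intros x hx. apply H2. unfold level in hx. lra. }
    pose proof (MU_bounded c (level phi t)). nra. }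
  assert (proj1_sig c' A <= proj1_sig c' (level phi 1)).
  { apply (cap_mono X); auto using cap_MU, level_closed.
    intros x hx. unfold level. rewrite H1; auto; lra. }
  pose proof (sugeno_ge X phi _ (MU_bounded c') 1 ltac:(lra)).
  unfold a in *. lra.
Qed.

Lemma separate_points (X : space) (c c' : MU X) : compactum X -> c <> c' ->
  exists phi : X -> I, cont X I phi /\ xiM X phi c <> xiM X phi c'.
Proof.
  intros HX Hne. destruct (MU_differ X c c' Hne) as [A [HA Hd]].
  destruct (Rlt_or_le (proj1_sig c A) (proj1_sig c' A)) as [h|h].
  - destruct (separate_on_closed X c c' A HX HA h) as [phi [Hc Hl]].
    exists phi. split; auto. intro E; rewrite E in Hl; lra.
  - destruct (separate_on_closed X c' c A HX HA ltac:(lra)) as [phi [Hc Hl]].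
    exists phi. split; auto. intro E; rewrite E in Hl; lra.
Qed.

Lemma cont_id : cont I I (fun x => x).
Proof. intros V HV; exact HV. Qed.

Theorem theorem2 :
  (* (I, xi) is an M^bullet_cup-algebra *)
  (cont (MU I) I xi /\
   (forall x : I, xi_r (eta I x) = x) /\
   (forall C : MU (MU I),
      xi_r (mu_bullet I (proj1_sig C)) = xi_r (push xi (proj1_sig C)))) /\
  (* for every compactum X, the maps xi o M_cup phi (phi in C(X,I)) are
     algebra morphisms (M_cup X, mu^bullet X) -> (I, xi) separating points *)
  (forall X : space, compactum X ->
     (forall phi : X -> I, cont X I phi ->
        cont (MU X) I (xiM X phi) /\
        forall C : MU (MU X),
          xi_r (push (xiM X phi) (proj1_sig C)) =
          xi_r (push phi (mu_bullet X (proj1_sig C)))) /\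
     (forall c c' : MU X, c <> c' ->
        exists phi : X -> I, cont X I phi /\ xiM X phi c <> xiM X phi c')).
Proof.
  (* [xi] is [xi o M_cup id] on [I], so the algebra laws for [(I, xi)] are the
     identity case of continuity and of the multiplication law. *)
  split; [split; [|split]|].
  - exact (xiM_cont I (fun x => x) cont_id).
  - exact eta_law.
  - intros C. symmetry. exact (mult_law I (fun x => x) C cont_id).
  - intros X HX. split.
    + intros phi Hphi. split; [apply xiM_cont, Hphi|intros C; apply mult_law, Hphi].
    + intros c c' Hne. apply separate_points; auto.
Qed.
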